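(* Let $p$ be a prime, $D$ the quaternion algebra over $\mathbb{Q}$ ramified exactly at $\{p,\infty\}$, and $\mathcal{O}$ a maximal order. Suppose $\lambda,\mu\in\mathcal{O}$ satisfy $N(\lambda)=p-1$, $N(\mu)=p$ and $\mathrm{tr}(r)=0$, where $r=\lambda\overline{\mu}$. Put \[g_{\lambda,\mu}=\begin{pmatrix}1&\lambda\\0&\mu\end{pmatrix},\qquad P_{\lambda,\mu}=\begin{pmatrix}1&\overline{r}/p\\0&1\end{pmatrix}.\] Then $g_{\lambda,\mu}$ is a valid choice of $g$, i.e. the left $\mathcal{O}$-lattice $\mathcal{O}^2g_{\lambda,\mu}$ lies in the non-principal genus, and $P_{\lambda,\mu}$ is a valid choice of $P$, i.e. with $A=g_{\lambda,\mu}\overline{g_{\lambda,\mu}}^T$ the matrix $P_{\lambda,\mu}A\overline{P_{\lambda,\mu}}^T$ is diagonal. Moreover $P_{\lambda,\mu}^{-1}=\overline{P_{\lambda,\mu}}$.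
   Context: $x\mapsto\overline{x}$ is quaternion conjugation, $N(x)=x\overline{x}$ the reduced norm, $\mathrm{tr}(x)=x+\overline{x}$ the reduced trace. For a matrix $M$ over $D$, $\overline{M}$ is the entrywise conjugate and $\overline{M}^T$ its transpose. $\mathrm{GU}_2(D_p)=\{h\in M_2(D_p):h\overline{h}^T=\mu(h)I,\ \mu(h)\in\mathbb{Q}_p^\times\}$ where $D_p=D\otimes\mathbb{Q}_p$, $\mathcal{O}_p=\mathcal{O}\otimes\mathbb{Z}_p$. A left $\mathcal{O}$-lattice $L\subset D^2$ (row vectors) lies in the non-principal genus if $L\otimes\mathbb{Z}_p$ is not of the form $\mathcal{O}_p^2h$ with $h\in\mathrm{GU}_2(D_p)$. *)

From HB Require Import structures.
From mathcomp Require Import all_boot all_order all_algebra.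
From mathcomp Require Import Rstruct.
Set Implicit Arguments. Unset Strict Implicit. Unset Printing Implicit Defensive.
Import Order.TTheory GRing.Theory Num.Theory.
Local Open Scope ring_scope.

(* Quaternion algebras (a,b)_R : basis 1,i,j,k with i^2=a, j^2=b,       *)
(* k=ij=-ji, over a commutative ring R.  Elements are coordinate       *)
(* 4-tuples.                                                           *)
Record quat (R : Type) := Quat { q0 : R; q1 : R; q2 : R; q3 : R }.

Section QuatOps.
Variable R : comNzRingType.

Definition qscal (c : R) : quat R := Quat c 0 0 0.
Definition qadd (x y : quat R) : quat R :=
  Quat (q0 x + q0 y) (q1 x + q1 y) (q2 x + q2 y) (q3 x + q3 y).
Definition qopp (x : quat R) : quat R := Quat (- q0 x) (- q1 x) (- q2 x) (- q3 x).
Definition qsub (x y : quat R) : quat R := qadd x (qopp y).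
Definition qscale (c : R) (x : quat R) : quat R :=
  Quat (c * q0 x) (c * q1 x) (c * q2 x) (c * q3 x).
Definition qconj (x : quat R) : quat R := Quat (q0 x) (- q1 x) (- q2 x) (- q3 x).
Definition qmul (a b : R) (x y : quat R) : quat R :=
  Quat (q0 x * q0 y + a * q1 x * q1 y + b * q2 x * q2 y - a * b * q3 x * q3 y)
       (q0 x * q1 y + q1 x * q0 y - b * q2 x * q3 y + b * q3 x * q2 y)
       (q0 x * q2 y + q2 x * q0 y + a * q1 x * q3 y - a * q3 x * q1 y)
       (q0 x * q3 y + q3 x * q0 y + q1 x * q2 y - q2 x * q1 y).

Definition qsumk (k : nat) (f : nat -> quat R) : quat R :=
  foldr (fun i acc => qadd (f i) acc) (qscal 0) (iota 0 k).

Record mat2 := M2 { e11 : quat R; e12 : quat R; e21 : quat R; e22 : quat R }.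

Definition mmul (a b : R) (A B : mat2) : mat2 :=
  M2 (qadd (qmul a b (e11 A) (e11 B)) (qmul a b (e12 A) (e21 B)))
     (qadd (qmul a b (e11 A) (e12 B)) (qmul a b (e12 A) (e22 B)))
     (qadd (qmul a b (e21 A) (e11 B)) (qmul a b (e22 A) (e21 B)))
     (qadd (qmul a b (e21 A) (e12 B)) (qmul a b (e22 A) (e22 B))).
Definition mconj (A : mat2) : mat2 :=
  M2 (qconj (e11 A)) (qconj (e12 A)) (qconj (e21 A)) (qconj (e22 A)).
Definition mtr (A : mat2) : mat2 := M2 (e11 A) (e21 A) (e12 A) (e22 A).
Definition mconjT (A : mat2) : mat2 := mtr (mconj A).
Definition mscal (c : R) : mat2 := M2 (qscal c) (qscal 0) (qscal 0) (qscal c).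
Definition vmul (a b : R) (v : quat R * quat R) (A : mat2) : quat R * quat R :=
  (qadd (qmul a b v.1 (e11 A)) (qmul a b v.2 (e21 A)),
   qadd (qmul a b v.1 (e12 A)) (qmul a b v.2 (e22 A))).
End QuatOps.

Arguments mat2 : clear implicits.

(* The rational quaternion algebra D = (a,b)_Q with a, b in Z.         *)
Definition Dmul (a b : int) := @qmul rat a%:~R b%:~R.
Definition Dmmul (a b : int) := @mmul rat a%:~R b%:~R.
Definition Dvmul (a b : int) := @vmul rat a%:~R b%:~R.

Definition qlin (c : seq int) (s : seq (quat rat)) : quat rat :=
  foldr (fun cs acc => qadd (qscale (cs.1)%:~R cs.2) acc) (qscal 0) (zip c s).

(* An order of D: a subring (containing 1, closed under - and * ) that is *)
(* a lattice, i.e. a finitely generated Z-module spanning D over Q.      *)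
Definition is_order (a b : int) (O : quat rat -> Prop) : Prop :=
  [/\ O (qscal 1),
      (forall x y, O x -> O y -> O (qsub x y)),
      (forall x y, O x -> O y -> O (Dmul a b x y)),
      (exists s : seq (quat rat),
          forall x, O x <-> exists c : seq int, size c = size s /\ x = qlin c s)
    & (forall x, exists n : nat, (0 < n)%N /\ O (qscale n%:R x))].

Definition is_maximal_order (a b : int) (O : quat rat -> Prop) : Prop :=
  is_order a b O /\
  forall O', is_order a b O' -> (forall x, O x -> O' x) -> (forall x, O' x -> O x).

(* l-adic completions, built as completions of Q (resp. D) w.r.t. the   *)
(* l-adic absolute value (on coordinates in the basis 1,i,j,k).         *)
(* r lies in l^n Z_(l)  (i.e. r = 0 or v_l(r) >= n) *)
Definition in_pZ (l n : nat) (r : rat) : Prop :=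
  exists (m : int) (d : nat), ~~ (l %| d)%N /\ r * d%:R = (l ^ n)%:R * m%:~R.

Definition rcauchy (l : nat) (c : nat -> rat) : Prop :=
  forall N, exists M, forall m n, (M <= m)%N -> (M <= n)%N -> in_pZ l N (c m - c n).
Definition rnull (l : nat) (c : nat -> rat) : Prop :=
  forall N, exists M, forall n, (M <= n)%N -> in_pZ l N (c n).

(* elements of Z_l : Cauchy sequences of l-integral rationals *)
Definition isZl (l : nat) (c : nat -> rat) : Prop :=
  rcauchy l c /\ forall n, in_pZ l 0 (c n).
(* elements of Q_l^x : non-null Cauchy sequences *)
Definition isQlunit (l : nat) (c : nat -> rat) : Prop :=
  rcauchy l c /\ ~ rnull l c.

(* elements of D_l = D (x) Q_l : Cauchy sequences in D *)
Definition qcauchy (l : nat) (X : nat -> quat rat) : Prop :=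
  [/\ rcauchy l (fun n => q0 (X n)), rcauchy l (fun n => q1 (X n)),
      rcauchy l (fun n => q2 (X n)) & rcauchy l (fun n => q3 (X n))].
Definition qnull (l : nat) (X : nat -> quat rat) : Prop :=
  [/\ rnull l (fun n => q0 (X n)), rnull l (fun n => q1 (X n)),
      rnull l (fun n => q2 (X n)) & rnull l (fun n => q3 (X n))].
(* equality in D_l *)
Definition qequiv (l : nat) (X Y : nat -> quat rat) : Prop :=
  qnull l (fun n => qsub (X n) (Y n)).

(* D ramified at the prime l : D (x) Q_l is a division algebra *)
Definition ramified_at (a b : int) (l : nat) : Prop :=
  forall X Y : nat -> quat rat, qcauchy l X -> qcauchy l Y ->
    ~ qnull l X -> ~ qnull l Y -> ~ qnull l (fun n => Dmul a b (X n) (Y n)).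

(* D ramified at infinity : D (x) R is a division algebra *)
Definition ramified_at_infty (a b : int) : Prop :=
  forall x y : quat Rdefinitions.R, x <> qscal 0 -> y <> qscal 0 ->
    qmul a%:~R b%:~R x y <> qscal 0.

Definition ramified_exactly_at_p_infty (a b : int) (p : nat) : Prop :=
  ramified_at_infty a b /\ forall l, prime l -> (ramified_at a b l <-> l = p).

Definition vcauchy l (V : nat -> quat rat * quat rat) :=
  qcauchy l (fun n => (V n).1) /\ qcauchy l (fun n => (V n).2).
Definition vequiv l (V W : nat -> quat rat * quat rat) :=
  qequiv l (fun n => (V n).1) (fun n => (W n).1) /\
  qequiv l (fun n => (V n).2) (fun n => (W n).2).
Definition mcauchy l (H : nat -> mat2 rat) :=
  [/\ qcauchy l (fun n => e11 (H n)), qcauchy l (fun n => e12 (H n)),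
      qcauchy l (fun n => e21 (H n)) & qcauchy l (fun n => e22 (H n))].
Definition mequiv l (H K : nat -> mat2 rat) :=
  [/\ qequiv l (fun n => e11 (H n)) (fun n => e11 (K n)),
      qequiv l (fun n => e12 (H n)) (fun n => e12 (K n)),
      qequiv l (fun n => e21 (H n)) (fun n => e21 (K n))
    & qequiv l (fun n => e22 (H n)) (fun n => e22 (K n))].

(* X is in O_l = O (x) Z_l  (Z_l-span of O inside D_l) *)
Definition in_Ol (l : nat) (O : quat rat -> Prop) (X : nat -> quat rat) : Prop :=
  exists (k : nat) (c : nat -> nat -> rat) (w : nat -> quat rat),
    (forall i, (i < k)%N -> isZl l (c i) /\ O (w i)) /\
    qequiv l X (fun n => qsumk k (fun i => qscale (c i n) (w i))).

(* V is in L (x) Z_l  (Z_l-span of L inside D_l^2) *)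
Definition in_Ll (l : nat) (L : quat rat * quat rat -> Prop)
    (V : nat -> quat rat * quat rat) : Prop :=
  exists (k : nat) (c : nat -> nat -> rat) (w : nat -> quat rat * quat rat),
    (forall i, (i < k)%N -> isZl l (c i) /\ L (w i)) /\
    vequiv l V (fun n => (qsumk k (fun i => qscale (c i n) (w i).1),
                          qsumk k (fun i => qscale (c i n) (w i).2))).

Definition in_Ol2h (a b : int) (l : nat) (O : quat rat -> Prop)
    (h : nat -> mat2 rat) (V : nat -> quat rat * quat rat) : Prop :=
  exists X Y : nat -> quat rat, in_Ol l O X /\ in_Ol l O Y /\
    vequiv l V (fun n => Dvmul a b (X n, Y n) (h n)).

Definition in_GU2 (a b : int) (l : nat) (h : nat -> mat2 rat) : Prop :=
  mcauchy l h /\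
  exists mu : nat -> rat, isQlunit l mu /\
    mequiv l (fun n => Dmmul a b (h n) (mconjT (h n))) (fun n => mscal (mu n)).

Definition nonprincipal_genus (a b : int) (p : nat) (O : quat rat -> Prop)
    (L : quat rat * quat rat -> Prop) : Prop :=
  ~ exists h : nat -> mat2 rat, in_GU2 a b p h /\
      forall V, vcauchy p V -> (in_Ll p L V <-> in_Ol2h a b p O h V).

Definition O2g (a b : int) (O : quat rat -> Prop) (g : mat2 rat)
    (v : quat rat * quat rat) : Prop :=
  exists x y, O x /\ O y /\ v = Dvmul a b (x, y) g.

Definition is_diag (A : mat2 rat) : Prop := e12 A = qscal 0 /\ e21 A = qscal 0.

From HB Require Import structures.
From mathcomp Require Import all_boot all_order all_algebra.
From mathcomp Require Import ring zify.
From Stdlib Require Import Classical.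
Set Implicit Arguments. Unset Strict Implicit. Unset Printing Implicit Defensive.
Import Order.TTheory GRing.Theory Num.Theory.
Local Open Scope ring_scope.

(* Suppose O^2 g = O_p^2 h locally at p, with h h^* = s I.  The first row of h lies in
   O_p^2 g = {(x, x lam + y mu)}, where the norm form equals
   p (N x + N y) + tr(x lam conj(y mu)); this trace is divisible by p because its argument
   has norm divisible by p, and otherwise Hensel's lemma would give zero divisors in the
   division algebra D_p.  Hence p | s.  Conversely the rows (1, lam) and (0, mu) of g lie in
   O_p^2 h, on which the hermitian form takes values in s O_p, so lam conj(mu) = s z with z
   in O_p and p^2 | N(lam conj(mu)) = (p - 1) p, a contradiction.  Elements of D_p are
   p-adic Cauchy sequences of rationals, so the argument is run at one index of the
   sequences, to a precision that absorbs the bounded denominators of O. *)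

(** * Quaternion arithmetic *)

Lemma quat_ext (R : Type) (x y : quat R) :
  q0 x = q0 y -> q1 x = q1 y -> q2 x = q2 y -> q3 x = q3 y -> x = y.
Proof. by case: x; case: y => /= ???? ???? -> -> -> ->. Qed.

Ltac qunfold := rewrite /Dmul /Dmmul /Dvmul /mmul /vmul /mconjT /mtr /mconj /mscal
  /qmul /qadd /qsub /qopp /qconj /qscal /qscale /=.
Ltac qring := apply: quat_ext; qunfold; ring.

Definition qnorm (a b : int) (x : quat rat) : rat := q0 (Dmul a b x (qconj x)).

Section QuatAlgebra.
Variables a b : int.
Local Notation qm := (Dmul a b).
Local Notation N := (qnorm a b).
Implicit Types (x y z : quat rat) (c d : rat).

Lemma qaddC x y : qadd x y = qadd y x. Proof. qring. Qed.
Lemma qadd0l x : qadd (qscal 0) x = x. Proof. qring. Qed.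
Lemma qadd0r x : qadd x (qscal 0) = x. Proof. qring. Qed.
Lemma qsubDD x y z t : qsub (qadd x y) (qadd z t) = qadd (qsub x z) (qsub y t).
Proof. qring. Qed.
Lemma qmulA x y z : qm x (qm y z) = qm (qm x y) z. Proof. qring. Qed.
Lemma qmulDl x y z : qm (qadd x y) z = qadd (qm x z) (qm y z). Proof. qring. Qed.
Lemma qmulDr x y z : qm z (qadd x y) = qadd (qm z x) (qm z y). Proof. qring. Qed.
Lemma qmul1l x : qm (qscal 1) x = x. Proof. qring. Qed.
Lemma qmul1r x : qm x (qscal 1) = x. Proof. qring. Qed.
Lemma qmul0l x : qm (qscal 0) x = qscal 0. Proof. qring. Qed.
Lemma qmul0r x : qm x (qscal 0) = qscal 0. Proof. qring. Qed.
Lemma qmul_scal c d : qm (qscal c) (qscal d) = qscal (c * d). Proof. qring. Qed.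
Lemma qconjK x : qconj (qconj x) = x. Proof. qring. Qed.
Lemma qconjD x y : qconj (qadd x y) = qadd (qconj x) (qconj y). Proof. qring. Qed.
Lemma qconjB x y : qconj (qsub x y) = qsub (qconj x) (qconj y). Proof. qring. Qed.
Lemma qconjM x y : qconj (qm x y) = qm (qconj y) (qconj x). Proof. qring. Qed.
Lemma qconj_scal c : qconj (qscal c) = qscal c. Proof. qring. Qed.

Lemma qnormM x y : N (qm x y) = N x * N y. Proof. rewrite /qnorm; qunfold; ring. Qed.
Lemma qnorm_conj x : N (qconj x) = N x. Proof. rewrite /qnorm; qunfold; ring. Qed.
Lemma qnorm_scal c : N (qscal c) = c ^+ 2. Proof. rewrite /qnorm; qunfold; ring. Qed.
Lemma qtrace_norm x : 2 * q0 x = N (qadd x (qscal 1)) - N x - 1.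
Proof. rewrite /qnorm; qunfold; ring. Qed.

Lemma qnormD x y : N (qadd x y) = N x + N y + 2 * q0 (qm x (qconj y)).
Proof. rewrite /qnorm; qunfold; ring. Qed.

Definition hform (v w : quat rat * quat rat) : quat rat :=
  qadd (qm v.1 (qconj w.1)) (qm v.2 (qconj w.2)).

Lemma qmul_scal_mid x c y : qm x (qm (qscal c) y) = qm (qscal c) (qm x y).
Proof. qring. Qed.

Lemma hform_vmul x1 y1 x2 y2 h : let H := Dmmul a b h (mconjT h) in
  hform (Dvmul a b (x1, y1) h) (Dvmul a b (x2, y2) h) =
  qadd (qadd (qm x1 (qm (e11 H) (qconj x2))) (qm x1 (qm (e12 H) (qconj y2))))
       (qadd (qm y1 (qm (e21 H) (qconj x2))) (qm y1 (qm (e22 H) (qconj y2)))).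
Proof.
case: h => h11 h12 h21 h22; rewrite /hform /Dvmul /vmul /Dmmul /mmul /mconjT /mtr /mconj /=.
rewrite -/(Dmul a b) !qconjD !qconjM !qmulDl !qmulDr !qmulA.
by apply: quat_ext; rewrite /qadd /=; ring.
Qed.

End QuatAlgebra.

Lemma qsumk2_closed (P : quat rat * quat rat -> Prop) k (f g : nat -> quat rat) :
  P (qscal 0, qscal 0) ->
  (forall x1 x2 y1 y2, P (x1, y1) -> P (x2, y2) -> P (qadd x1 x2, qadd y1 y2)) ->
  (forall i, (i < k)%N -> P (f i, g i)) -> P (qsumk k f, qsumk k g).
Proof.
move=> P0 PD Pfg; rewrite /qsumk.
have : forall i, i \in iota 0 k -> P (f i, g i).
  by move=> i; rewrite mem_iota => /andP [_]; apply: Pfg.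
elim: (iota 0 k) => //= i s IHs Ps.
apply: PD; first by apply: Ps; rewrite inE eqxx.
by apply: IHs => j sj; apply: Ps; rewrite inE sj orbT.
Qed.

Lemma qsumk_closed (P : quat rat -> Prop) k (f : nat -> quat rat) :
  P (qscal 0) -> (forall x y, P x -> P y -> P (qadd x y)) ->
  (forall i, (i < k)%N -> P (f i)) -> P (qsumk k f).
Proof.
move=> P0 PD Pf.
by apply: (@qsumk2_closed (fun v => P v.1) k f f) => // ????; apply: PD.
Qed.

Definition qall (P : rat -> Prop) (x : quat rat) : Prop :=
  [/\ P (q0 x), P (q1 x), P (q2 x) & P (q3 x)].

Lemma qall_add (P : rat -> Prop) x y : (forall u v, P u -> P v -> P (u + v)) ->
  qall P x -> qall P y -> qall P (qadd x y).
Proof. by move=> PD [????] [????]; split; apply: PD. Qed.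

Lemma qall_opp (P : rat -> Prop) x : (forall u, P u -> P (- u)) ->
  qall P x -> qall P (qopp x).
Proof. by move=> PN [????]; split; apply: PN. Qed.

Lemma qall_conj (P : rat -> Prop) x : (forall u, P u -> P (- u)) ->
  qall P x -> qall P (qconj x).
Proof. by move=> PN [????]; split => //; apply: PN. Qed.

Lemma qall_mul (a b : int) (P1 P2 P3 : rat -> Prop) x y :
  (forall u v, P3 u -> P3 v -> P3 (u + v)) -> (forall u, P3 u -> P3 (- u)) ->
  (forall (z : int) u, P3 u -> P3 (z%:~R * u)) ->
  (forall u v, P1 u -> P2 v -> P3 (u * v)) ->
  qall P1 x -> qall P2 y -> qall P3 (Dmul a b x y).
Proof.
move=> PD PN PZ PM [x0 x1 x2 x3] [y0 y1 y2 y3]; rewrite /qall /Dmul /qmul /= -!mulrA.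
by split; repeat first [apply: (PD) | apply: (PN) | apply: (PZ) | apply: (PM)].
Qed.

(** * p-adic integrality of rationals *)

Section PadicIntegrality.
Variable p : nat.
Hypothesis p_pr : prime p.

Lemma prime_ndvd1 : ~~ (p %| 1)%N.
Proof. by rewrite dvdn1 gtn_eqF ?prime_gt1. Qed.

Lemma natr_pX_neq0 n : ((p ^ n)%:R : rat) != 0.
Proof. by rewrite pnatr_eq0 -lt0n expn_gt0 prime_gt0. Qed.

Lemma prime_ndvd_num_den x : (p %| `|numq x|)%N -> ~~ (p %| `|denq x|)%N.
Proof.
move=> pn; apply/negP => pd; have /eqP g := coprime_num_den x.
by move: prime_ndvd1; rewrite -g dvdn_gcd pn pd.
Qed.

Lemma numq_mul_eq x (m : int) (d K : nat) :
  x * d%:R = K%:R * m%:~R -> numq x * d%:Z = K%:Z * m * denq x.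
Proof.
move=> h; apply: (@intr_inj rat); rewrite !intrM numqE.
by transitivity ((x * d%:R) * (denq x)%:~R); [ring | rewrite h; ring].
Qed.

Lemma in_pZ_scale n x :
  in_pZ p n x <-> exists2 y, in_pZ p 0 y & x = (p ^ n)%:R * y.
Proof.
split=> [[m [d [nd h]]] | [y [m [d [nd h]]] ->]].
  exists (x / (p ^ n)%:R); last by rewrite mulrC divfK ?natr_pX_neq0.
  by exists m, d; split => //; rewrite expn0 mul1r mulrAC h mulrAC divff ?natr_pX_neq0 ?mul1r.
by exists m, d; split => //; rewrite -mulrA h expn0 mul1r.
Qed.

Lemma in_pZ0 n : in_pZ p n 0.
Proof. by exists 0, 1%N; split; [exact: prime_ndvd1 | rewrite !mul0r mulr0]. Qed.

Lemma in_pZ_int (z : int) : in_pZ p 0 z%:~R.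
Proof. by exists z, 1%N; split; [exact: prime_ndvd1 | rewrite mulr1 expn0 mul1r]. Qed.

Lemma in_pZ_nat (k : nat) : in_pZ p 0 k%:R.
Proof. exact: (in_pZ_int k). Qed.

Lemma in_pZD n x y : in_pZ p n x -> in_pZ p n y -> in_pZ p n (x + y).
Proof.
case=> m1 [d1 [n1 h1]] [m2 [d2 [n2 h2]]].
exists (m1 * d2%:Z + m2 * d1%:Z), (d1 * d2)%N; split.
  by rewrite Euclid_dvdM // negb_or n1 n2.
have -> : (x + y) * (d1 * d2)%:R = (x * d1%:R) * d2%:R + (y * d2%:R) * d1%:R.
  by rewrite natrM; ring.
rewrite h1 h2; ring.
Qed.

Lemma in_pZN n x : in_pZ p n x -> in_pZ p n (- x).
Proof. by case=> m [d [nd h]]; exists (- m), d; split => //; rewrite mulNr h; ring. Qed.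

Lemma in_pZB n x y : in_pZ p n x -> in_pZ p n y -> in_pZ p n (x - y).
Proof. by move=> hx hy; apply: in_pZD => //; apply: in_pZN. Qed.

Lemma in_pZM n k x y : in_pZ p n x -> in_pZ p k y -> in_pZ p (n + k) (x * y).
Proof.
case=> m1 [d1 [n1 h1]] [m2 [d2 [n2 h2]]].
exists (m1 * m2), (d1 * d2)%N; split; first by rewrite Euclid_dvdM // negb_or n1 n2.
have -> : (x * y) * (d1 * d2)%:R = (x * d1%:R) * (y * d2%:R) by rewrite natrM; ring.
by rewrite h1 h2 expnD natrM; ring.
Qed.

Lemma in_pZMl n x y : in_pZ p 0 x -> in_pZ p n y -> in_pZ p n (x * y).
Proof. exact: in_pZM. Qed.

Lemma in_pZMr n x y : in_pZ p n x -> in_pZ p 0 y -> in_pZ p n (x * y).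
Proof. by move=> hx hy; rewrite -[n]addn0; apply: in_pZM. Qed.

Lemma in_pZ_le k n x : (k <= n)%N -> in_pZ p n x -> in_pZ p k x.
Proof.
move=> kn /in_pZ_scale [y hy ->]; apply/in_pZ_scale.
exists ((p ^ (n - k))%:R * y); first exact: in_pZMl (in_pZ_nat _) hy.
by rewrite mulrA -natrM -expnD subnKC.
Qed.

Lemma in_pZ_pX n : in_pZ p n (p ^ n)%:R.
Proof. by apply/in_pZ_scale; exists 1; [exact: (in_pZ_nat 1) | rewrite mulr1]. Qed.

Lemma in_pZ_p : in_pZ p 1 p%:R.
Proof. exact: in_pZ_pX 1. Qed.

Lemma in_pZ_divX n k x : in_pZ p (n + k) ((p ^ k)%:R * x) -> in_pZ p n x.
Proof.
move/in_pZ_scale=> [y hy e]; apply/in_pZ_scale; exists y => //.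
apply: (mulfI (natr_pX_neq0 k)); rewrite e expnD natrM; ring.
Qed.

Lemma in_pZ_invn (d : nat) : ~~ (p %| d)%N -> in_pZ p 0 d%:R^-1.
Proof.
move=> nd; exists 1, d; split => //; rewrite mulVf ?expn0 ?mulr1 //.
by rewrite pnatr_eq0; apply: contraNneq nd => ->.
Qed.

Lemma in_pZ_unit x : in_pZ p 0 x -> ~ in_pZ p 1 x -> x != 0 /\ in_pZ p 0 x^-1.
Proof.
case=> m [d [nd h]] np; rewrite expn0 mul1r in h.
have x0 : x != 0 by apply: contra_notN np => /eqP ->; apply: in_pZ0.
split => //.
have m0 : ~~ (p %| `|m|)%N.
  apply/negP => /dvdnP [k ek]; apply: np; exists (sgz m * k%:Z), d; split => //.
  by rewrite h expn1 {1}[m]intEsg ek; ring.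
exists (sgz m * d%:Z), `|m|%N; split => //.
have -> : (`|m|%:R : rat) = (sgz m)%:~R * m%:~R by rewrite -intrM -abszEsg.
by rewrite -h expn0 mul1r intrM; field.
Qed.

Lemma in_pZ_all_eq0 x : (forall N, in_pZ p N x) -> x = 0.
Proof.
move=> h; apply/eqP/negPn/negP => x0.
have nq : numq x != 0 by rewrite numq_eq0.
case: (h `|numq x|%N) => m [d [nd /numq_mul_eq e]].
have : (p ^ `|numq x| %| absz (numq x * d%:Z)%R)%N by rewrite e !abszM /= -mulnA dvdn_mulr.
rewrite abszM /= Gauss_dvdl; last by rewrite coprimeXl // prime_coprime.
move/dvdn_leq; rewrite absz_gt0 nq => /(_ isT).
by rewrite leqNgt ltn_expl ?prime_gt1.
Qed.

(* [p ^ K * u] is [p]-integral: the [p]-adic valuation of [u] is at least [-K]. *)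
Definition pbnd K u := in_pZ p 0 ((p ^ K)%:R * u).

Lemma pbnd0 K : pbnd K 0.
Proof. by rewrite /pbnd mulr0; apply: in_pZ0. Qed.

Lemma pbndD K u v : pbnd K u -> pbnd K v -> pbnd K (u + v).
Proof. by rewrite /pbnd mulrDr; apply: in_pZD. Qed.

Lemma pbndN K u : pbnd K u -> pbnd K (- u).
Proof. by rewrite /pbnd mulrN; apply: in_pZN. Qed.

Lemma pbndMz K (z : int) u : pbnd K u -> pbnd K (z%:~R * u).
Proof. by move=> hu; rewrite /pbnd mulrCA; apply: in_pZMl (in_pZ_int z) hu. Qed.

Lemma pbndM K1 K2 u v : pbnd K1 u -> pbnd K2 v -> pbnd (K1 + K2) (u * v).
Proof.
move=> hu hv; have := in_pZM hu hv; rewrite /pbnd expnD natrM.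
by congr in_pZ; ring.
Qed.

Lemma pbnd_le K K' u : (K <= K')%N -> pbnd K u -> pbnd K' u.
Proof.
move=> le hu; rewrite /pbnd -(subnK le) expnD natrM -mulrA.
by apply: in_pZMl (in_pZ_nat _) hu.
Qed.

Lemma pbnd_in_pZ K n u : in_pZ p n u -> pbnd K u.
Proof. by move=> hu; apply: in_pZMl (in_pZ_nat _) (in_pZ_le (leq0n n) hu). Qed.

Lemma in_pZ_pbndM K n u v : pbnd K u -> in_pZ p (n + K) v -> in_pZ p n (u * v).
Proof. by move=> hu hv; apply: (@in_pZ_divX n K); rewrite mulrA; apply: in_pZMl. Qed.

Lemma pbnd_exists x : exists K, pbnd K x.
Proof.
have dp : (0 < `|denq x|)%N by rewrite absz_gt0 denq_neq0.
case: (pfactor_coprime p_pr dp) => m cm em.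
exists (logn p `|denq x|), (numq x), m; split; first by rewrite -prime_coprime.
rewrite expn0 mul1r numqE.
have -> : ((denq x)%:~R : rat) = ((m * p ^ logn p `|denq x|)%:R : rat).
  by rewrite -em -[denq x]gez0_abs ?ltW ?denq_gt0.
by rewrite natrM; ring.
Qed.

Lemma pbnd_powers J x : (forall k, pbnd J (x ^+ k)) -> in_pZ p 0 x.
Proof.
move=> h; case: (boolP (p %| `|denq x|)%N) => [pd | nd]; last first.
  exists (numq x), `|denq x|%N; split => //.
  by rewrite expn0 mul1r numqE -[in RHS](@gez0_abs (denq x)) ?ltW ?denq_gt0.
case: (h J.+1) => m [d [nd e]]; rewrite expn0 mul1r in e.
have e2 : (p ^ J)%:Z * numq x ^+ J.+1 * d%:Z = m * denq x ^+ J.+1.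
  apply: (@intr_inj rat); rewrite !rmorphM !rmorphXn /= numqE exprMn.
  by rewrite -[(p%:Z)%:~R]/(p%:R) -natrX -e; ring.
have : (p ^ J.+1 %| absz ((p ^ J)%:Z * numq x ^+ J.+1 * d%:Z)%R)%N.
  by rewrite e2 abszM abszX dvdn_mull // dvdn_exp2r.
rewrite !abszM abszX /= expnS [(p * _)%N]mulnC -!mulnA dvdn_pmul2l ?expn_gt0 ?prime_gt0 //.
rewrite Euclid_dvdM // (negbTE nd) orbF Euclid_dvdX // andbT => pn.
by move: (prime_ndvd_num_den pn); rewrite pd.
Qed.

Lemma in_pZ_sqr x : in_pZ p 1 (x * x) -> in_pZ p 1 x.
Proof.
case=> m [d [nd e]].
have e2 : numq x * numq x * d%:Z = p%:Z * m * (denq x * denq x).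
  apply: (@intr_inj rat); rewrite !intrM !numqE -[(p%:Z)%:~R]/(p%:R) -[(d%:Z)%:~R]/(d%:R).
  by rewrite -[X in X * m%:~R]/((p ^ 1)%:R) -e; ring.
have : (p %| absz (numq x * numq x * d%:Z)%R)%N by rewrite e2 !abszM /= -mulnA dvdn_mulr.
rewrite !abszM /= !Euclid_dvdM // (negbTE nd) orbF orbb => pn.
have [k ek] := dvdnP pn.
exists (sgz (numq x) * k%:Z), `|denq x|%N; split; first exact: prime_ndvd_num_den.
have -> : (`|denq x|%:R : rat) = (denq x)%:~R.
  by rewrite -[in RHS](@gez0_abs (denq x)) ?ltW ?denq_gt0.
by rewrite -numqE {1}[numq x]intEsg ek expn1; ring.
Qed.

Lemma pred_p_notin_pZ1 : ~ in_pZ p 1 (p%:R - 1).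
Proof.
case=> m [d [nd e]].
have e2 : (p.-1 * d)%N%:Z = p%:Z * m.
  apply: (@intr_inj rat); rewrite intrM -[(p%:Z)%:~R]/((p ^ 1)%:R) -e.
  rewrite -[((_ * _)%N%:Z)%:~R]/((p.-1 * d)%:R) natrM.
  by rewrite -[in RHS](prednK (prime_gt0 p_pr)) -addn1 natrD; ring.
have : (p %| p.-1 * d)%N by rewrite -[(_ * _)%N]/(absz (p.-1 * d)%N%:Z) e2 abszM dvdn_mulr.
by rewrite Gauss_dvdr ?(negbTE nd) // -(prednK (prime_gt0 p_pr)) coprimeSn.
Qed.

Lemma rcauchy_const u : rcauchy p (fun _ => u).
Proof. by move=> K; exists 0%N => m n _ _; rewrite subrr; apply: in_pZ0. Qed.

Lemma rcauchyB (c d : nat -> rat) :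
  rcauchy p c -> rcauchy p d -> rcauchy p (fun n => c n - d n).
Proof.
move=> hc hd K; have [M1 h1] := hc K; have [M2 h2] := hd K.
exists (maxn M1 M2) => m n; rewrite !geq_max => /andP [m1 m2] /andP [n1 n2].
by rewrite (_ : _ - _ = (c m - c n) - (d m - d n)); [apply: in_pZB; auto | ring].
Qed.

Lemma rnull_const u : rnull p (fun _ => u) -> u = 0.
Proof. by move=> h; apply: in_pZ_all_eq0 => K; have [M hM] := h K; apply: (hM M). Qed.

Lemma rcauchy_steps (c : nat -> rat) :
  (forall k, in_pZ p k.+1 (c k.+1 - c k)) -> rcauchy p c.
Proof.
move=> hc; have from_K K j : in_pZ p K (c (K + j)%N - c K).
  elim: j => [|j IHj]; first by rewrite addn0 subrr; apply: in_pZ0.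
  rewrite addnS (_ : _ - _ = (c (K + j).+1 - c (K + j)%N) + (c (K + j)%N - c K)); last by ring.
  by apply: in_pZD IHj; apply: in_pZ_le (hc _); lia.
move=> K; exists K => m n hm hn.
rewrite -(subnKC hm) -(subnKC hn).
rewrite (_ : _ - _ = (c (K + (m - K))%N - c K) - (c (K + (n - K))%N - c K)).
  exact: in_pZB.
by ring.
Qed.

(* The iteration [al (k+1) = m / (t - al k)] converges p-adically to a root. *)
Lemma hensel_root t m : in_pZ p 0 t -> ~ in_pZ p 1 t -> in_pZ p 1 m ->
  exists2 al : nat -> rat, rcauchy p al & forall k, in_pZ p k.+1 (al k ^+ 2 - t * al k + m).
Proof.
move=> t0 t1 hm; pose fix al k := if k is k'.+1 then m / (t - al k') else 0.
have unit k : in_pZ p 1 (al k) -> t - al k != 0 /\ in_pZ p 0 (t - al k)^-1.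
  move=> hk; apply: in_pZ_unit; first by apply: in_pZB t0 (in_pZ_le _ hk).
  by move=> h; apply: t1; rewrite (_ : t = (t - al k) + al k); [apply: in_pZD | ring].
have al_pZ k : in_pZ p 1 (al k).
  elim: k => [|k IHk] /=; first exact: in_pZ0.
  by have [_ hi] := unit k IHk; apply: in_pZMr hm hi.
have al_step k : in_pZ p k.+1 (al k.+1 - al k).
  elim: k => [|k IHk]; first by rewrite /= subr0; exact: al_pZ 1%N.
  have [u1 i1] := unit k.+1 (al_pZ _); have [u0 i0] := unit k (al_pZ _).
  rewrite (_ : _ - _ = m * (al k.+1 - al k) * ((t - al k.+1)^-1 * (t - al k)^-1)).
    by apply: in_pZMr; [rewrite -add1n; apply: in_pZM | apply: in_pZMl].
  rewrite (_ : al k.+2 - al k.+1 = m / (t - al k.+1) - m / (t - al k)) //.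
  by move: (al k.+1) (al k) u1 u0 => A1 A0 u1 u0; field; rewrite u1 u0.
exists al; first exact: rcauchy_steps.
move=> k; have [u0 _] := unit k (al_pZ _).
rewrite (_ : _ + m = (al k.+1 - al k) * (t - al k)).
  exact: in_pZMr (al_step k) (in_pZB t0 (in_pZ_le (leq0n 1) (al_pZ k))).
rewrite (_ : al k.+1 = m / (t - al k)) //.
by move: (al k) u0 => A0 u0; field.
Qed.

Definition eventually (P : nat -> Prop) := exists M, forall n, (M <= n)%N -> P n.

Lemma eventually_and (P Q : nat -> Prop) :
  eventually P -> eventually Q -> eventually (fun n => P n /\ Q n).
Proof.
case=> M1 h1 [M2 h2]; exists (maxn M1 M2) => n; rewrite geq_max => /andP [n1 n2].
by split; [apply: h1 | apply: h2].
Qed.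

(** * Congruences modulo powers of p in D *)

Section QuatCongruence.
Variables a b : int.
Local Notation qm := (Dmul a b).
Local Notation N := (qnorm a b).
Implicit Types (x y z t : quat rat) (u : rat).

Definition qin_pZ n := qall (in_pZ p n).
Definition qbnd K := qall (pbnd K).
Definition qcong n x y := qin_pZ n (qsub x y).

Lemma qin_pZD n x y : qin_pZ n x -> qin_pZ n y -> qin_pZ n (qadd x y).
Proof. by apply: qall_add => ??; apply: in_pZD. Qed.

Lemma qin_pZ_conj n x : qin_pZ n x -> qin_pZ n (qconj x).
Proof. by apply: qall_conj => ?; apply: in_pZN. Qed.

Lemma qin_pZ_le k n x : (k <= n)%N -> qin_pZ n x -> qin_pZ k x.
Proof. by move=> le [????]; split; apply: in_pZ_le le _. Qed.

Lemma qin_pZ_scal n u : in_pZ p n u -> qin_pZ n (qscal u).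
Proof. by split => //; apply: in_pZ0. Qed.

Lemma qbndD K x y : qbnd K x -> qbnd K y -> qbnd K (qadd x y).
Proof. by apply: qall_add => ??; apply: pbndD. Qed.

Lemma qbnd_conj K x : qbnd K x -> qbnd K (qconj x).
Proof. by apply: qall_conj => ?; apply: pbndN. Qed.

Lemma qbnd_le K K' x : (K <= K')%N -> qbnd K x -> qbnd K' x.
Proof. by move=> le [????]; split; apply: pbnd_le le _. Qed.

Lemma qbnd_in_pZ K n x : qin_pZ n x -> qbnd K x.
Proof. by case=> ????; split; apply: pbnd_in_pZ; eassumption. Qed.

Lemma qbnd_scal K u : pbnd K u -> qbnd K (qscal u).
Proof. by split=> //; apply: pbnd0. Qed.

Lemma qbnd_exists x : exists K, qbnd K x.
Proof.
have [K0 h0] := pbnd_exists (q0 x); have [K1 h1] := pbnd_exists (q1 x).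
have [K2 h2] := pbnd_exists (q2 x); have [K3 h3] := pbnd_exists (q3 x).
by exists (K0 + K1 + K2 + K3)%N; split; apply: pbnd_le; try eassumption; lia.
Qed.

Lemma qbndM K1 K2 x y : qbnd K1 x -> qbnd K2 y -> qbnd (K1 + K2) (qm x y).
Proof. apply: qall_mul; [exact: pbndD | exact: pbndN | exact: pbndMz | exact: pbndM]. Qed.

Lemma qin_pZ_mull K n x y : qbnd K x -> qin_pZ (n + K) y -> qin_pZ n (qm x y).
Proof.
apply: qall_mul; [exact: in_pZD | exact: in_pZN | | exact: in_pZ_pbndM].
by move=> z u hu; apply: in_pZMl (in_pZ_int _) hu.
Qed.

Lemma qin_pZ_mulr K n x y : qin_pZ (n + K) x -> qbnd K y -> qin_pZ n (qm x y).
Proof.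
apply: qall_mul; [exact: in_pZD | exact: in_pZN | | ].
  by move=> z u hu; apply: in_pZMl (in_pZ_int _) hu.
by move=> u v hu hv; rewrite mulrC; apply: in_pZ_pbndM hu.
Qed.

Lemma qcong_refl n x : qcong n x x.
Proof. by rewrite /qcong (_ : qsub x x = qscal 0); [exact/qin_pZ_scal/in_pZ0 | qring]. Qed.

Lemma qcong_sym n x y : qcong n x y -> qcong n y x.
Proof.
rewrite /qcong (_ : qsub y x = qopp (qsub x y)); last by qring.
by apply: qall_opp => ?; apply: in_pZN.
Qed.

Lemma qcong_trans n x y z : qcong n x y -> qcong n y z -> qcong n x z.
Proof. by rewrite /qcong (_ : qsub x z = qadd (qsub x y) (qsub y z)); [exact: qin_pZD | qring]. Qed.

Lemma qcongD n x y z t : qcong n x z -> qcong n y t -> qcong n (qadd x y) (qadd z t).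
Proof. by rewrite /qcong qsubDD; apply: qin_pZD. Qed.

Lemma qcong_conj n x y : qcong n x y -> qcong n (qconj x) (qconj y).
Proof. by rewrite /qcong -qconjB; apply: qin_pZ_conj. Qed.

Lemma qcong_le k n x y : (k <= n)%N -> qcong n x y -> qcong k x y.
Proof. exact: qin_pZ_le. Qed.

Lemma qcong_qbnd K n x y : qcong n x y -> qbnd K y -> qbnd K x.
Proof.
move=> hxy hy; have -> : x = qadd (qsub x y) y by qring.
exact: qbndD (qbnd_in_pZ _ hxy) hy.
Qed.

Lemma qcongM K n x y z t : qbnd K z -> qbnd K t ->
  qcong (n + K) x z -> qcong (n + K) y t -> qcong n (qm x y) (qm z t).
Proof.
move=> hz ht hxz hyt; rewrite /qcong.
have -> : qsub (qm x y) (qm z t) = qadd (qm (qsub x z) y) (qm z (qsub y t)) by qring.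
apply: qin_pZD; last exact: qin_pZ_mull hz hyt.
exact: qin_pZ_mulr hxz (qcong_qbnd hyt ht).
Qed.

Lemma qcong_norm K n x y : qbnd K y -> qcong (n + K) x y -> in_pZ p n (N x - N y).
Proof. by move=> hy hxy; case: (qcongM hy (qbnd_conj hy) hxy (qcong_conj hxy)). Qed.

Lemma qcong_sandwich K n x y c u : qbnd K x -> qbnd K y -> in_pZ p 0 u ->
  qcong (n + 3 * K) c (qscal u) -> qcong n (qm x (qm c y)) (qm x (qm (qscal u) y)).
Proof.
move=> hx hy hu hc; have bu : qbnd K (qscal u) := qbnd_scal (pbnd_in_pZ K hu).
apply: qcongM (qbnd_le (leq_addl _ _) hx) (qbndM bu hy) (qcong_refl _ _) _.
apply: qcongM bu hy (qcong_le _ hc) (qcong_refl _ _); lia.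
Qed.

Definition vcong n (v w : quat rat * quat rat) := qcong n v.1 w.1 /\ qcong n v.2 w.2.

Definition mcong n (A B : mat2 rat) :=
  [/\ qcong n (e11 A) (e11 B), qcong n (e12 A) (e12 B),
       qcong n (e21 A) (e21 B) & qcong n (e22 A) (e22 B)].

Lemma hform_cong K n (v w v' w' : quat rat * quat rat) :
  qbnd K v'.1 -> qbnd K v'.2 -> qbnd K w'.1 -> qbnd K w'.2 ->
  vcong (n + K) v v' -> vcong (n + K) w w' -> qcong n (hform a b v w) (hform a b v' w').
Proof.
move=> v1 v2 w1 w2 [vv1 vv2] [ww1 ww2].
apply: qcongD; first exact: qcongM v1 (qbnd_conj w1) vv1 (qcong_conj ww1).
exact: qcongM v2 (qbnd_conj w2) vv2 (qcong_conj ww2).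
Qed.

Lemma qcauchy_sub_scal z (c : nat -> rat) :
  rcauchy p c -> qcauchy p (fun n => qsub z (qscal (c n))).
Proof.
by move=> hc; split=> /=; try apply: rcauchy_const; apply: rcauchyB (rcauchy_const _) hc.
Qed.

Lemma qnull_sub_scal z (c : nat -> rat) :
  qnull p (fun n => qsub z (qscal (c n))) -> [&& q1 z == 0, q2 z == 0 & q3 z == 0].
Proof.
case=> _ z1 z2 z3; rewrite /= oppr0 !addr0 in z1 z2 z3.
by rewrite (rnull_const z1) (rnull_const z2) (rnull_const z3) !eqxx.
Qed.

(* [z] is a root of [X^2 - tr(z) X + N(z)]; if the trace were a unit, Hensel's lemma would
   factor this polynomial over Q_p and produce zero divisors [z - al] and [z - (tr(z) - al)]
   in D_p. *)
Lemma ramified_trace_in_pZ1 z : ramified_at a b p ->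
  in_pZ p 0 (2 * q0 z) -> in_pZ p 1 (N z) -> in_pZ p 1 (2 * q0 z).
Proof.
move=> ram t0 m1; apply: NNPP => t1.
have [/and3P [/eqP z1 /eqP z2 /eqP z3] | z_nonscalar] :=
  boolP [&& q1 z == 0, q2 z == 0 & q3 z == 0].
  apply: t1; apply: in_pZMl (in_pZ_nat 2) (in_pZ_sqr _).
  by rewrite (_ : q0 z * q0 z = N z) // /qnorm; qunfold; rewrite z1 z2 z3; ring.
have [al al_cauchy al_root] := hensel_root t0 t1 m1.
have z_not_scal c : ~ qnull p (fun n => qsub z (qscal (c n))).
  by move/qnull_sub_scal; apply/negP.
apply: (ram _ _ (qcauchy_sub_scal z al_cauchy)
  (qcauchy_sub_scal z (rcauchyB (rcauchy_const (2 * q0 z)) al_cauchy))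
  (z_not_scal _) (z_not_scal _)).
have e n : qm (qsub z (qscal (al n))) (qsub z (qscal (2 * q0 z - al n))) =
           qscal (- (al n ^+ 2 - 2 * q0 z * al n + N z)).
  by rewrite /qnorm; qring.
split=> K; exists K => n Kn; rewrite e /=; try exact: in_pZ0.
by apply/in_pZN/(in_pZ_le _ (al_root n)); lia.
Qed.

Lemma qequiv_cong X Y : qequiv p X Y -> forall n, eventually (fun m => qcong n (X m) (Y m)).
Proof.
case=> h0 h1 h2 h3 n.
have [M hM] := eventually_and (h0 n) (eventually_and (h1 n) (eventually_and (h2 n) (h3 n))).
by exists M => m /hM [? [? [? ?]]]; split.
Qed.

Lemma qequiv_eq X Y : (forall n, X n = Y n) -> qequiv p X Y.
Proof. by move=> e; split=> N; exists 0%N => n _; rewrite e /= subrr; apply: in_pZ0. Qed.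

Lemma vequiv_cong V W : vequiv p V W -> forall n, eventually (fun m => vcong n (V m) (W m)).
Proof. by case=> e1 e2 n; apply: eventually_and (qequiv_cong e1 n) (qequiv_cong e2 n). Qed.

Lemma mequiv_cong H G : mequiv p H G -> forall n, eventually (fun m => mcong n (H m) (G m)).
Proof.
case=> e11 e12 e21 e22 n; have [M hM] := eventually_and (qequiv_cong e11 n)
  (eventually_and (qequiv_cong e12 n) (eventually_and (qequiv_cong e21 n) (qequiv_cong e22 n))).
by exists M => m /hM [? [? [? ?]]]; split.
Qed.

Lemma vcauchy_const v : vcauchy p (fun _ => v).
Proof. by split; split; apply: rcauchy_const. Qed.

Lemma isZl1 : isZl p (fun _ => 1).
Proof. by split=> [|_]; [apply: rcauchy_const | apply: in_pZ_nat 1]. Qed.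

Lemma in_Ll_const (L : quat rat * quat rat -> Prop) v : L v -> in_Ll p L (fun _ => v).
Proof.
move=> Lv; exists 1%N, (fun _ _ => 1), (fun _ => v).
split=> [i _|]; first by split=> //; apply: isZl1.
by split; apply: qequiv_eq => n; rewrite /qsumk /=; qring.
Qed.

(** * Orders and their localisation at p *)

Section Order.
Variable O : quat rat -> Prop.
Hypothesis O_order : is_order a b O.

Lemma O1 : O (qscal 1). Proof. by case: O_order. Qed.

Lemma O_sub x y : O x -> O y -> O (qsub x y).
Proof. by case: O_order => _ OB _ _ _; apply: OB. Qed.

Lemma O_mul x y : O x -> O y -> O (qm x y).
Proof. by case: O_order => _ _ OM _ _; apply: OM. Qed.

Lemma O0 : O (qscal 0).
Proof. by rewrite (_ : qscal 0 = qsub (qscal 1) (qscal 1)); [apply: O_sub; apply: O1 | qring]. Qed.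

Lemma O_add x y : O x -> O y -> O (qadd x y).
Proof.
move=> Ox Oy; rewrite (_ : qadd x y = qsub x (qsub (qscal 0) y)); last by qring.
by apply: O_sub => //; apply: O_sub Oy; apply: O0.
Qed.

Lemma O_scal_int (z : int) : O (qscal z%:~R).
Proof.
have O_nat n : O (qscal n%:R).
  elim: n => [|n IHn]; first exact: O0.
  by rewrite (_ : qscal _ = qadd (qscal n%:R) (qscal 1)); [apply: O_add IHn O1 | qring].
case: z => n; first exact: O_nat.
rewrite (_ : qscal _ = qsub (qscal 0) (qscal n.+1%:R)); first exact: O_sub O0 (O_nat _).
by rewrite NegzE; qring.
Qed.

Lemma O_scale_int (z : int) x : O x -> O (qscale z%:~R x).
Proof.
move=> Ox; rewrite (_ : qscale _ _ = qm (qscal z%:~R) x); last by qring.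
exact: O_mul (O_scal_int z) Ox.
Qed.

Lemma O_scale_nat (n : nat) x : O x -> O (qscale n%:R x).
Proof. exact: (O_scale_int n). Qed.

Lemma qlin_qbnd s : exists K, forall c, qbnd K (qlin c s).
Proof.
elim: s => [|w s [K IHs]]; first by exists 0%N => -[|??]; apply/qbnd_scal/pbnd0.
have [Kw [w0 w1 w2 w3]] := qbnd_exists w.
exists (K + Kw)%N => -[|c0 c] /=; first exact/qbnd_scal/pbnd0.
apply: qbndD; last exact: qbnd_le (leq_addr _ _) (IHs c).
by split; apply: pbndMz; apply: pbnd_le (leq_addl _ _) _.
Qed.

Lemma O_qbnd : exists K, forall x, O x -> qbnd K x.
Proof.
case: O_order => _ _ _ [s hs] _; have [K hK] := qlin_qbnd s.
by exists K => x /hs [c [_ ->]].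
Qed.

Lemma O_norm x : O x -> in_pZ p 0 (N x).
Proof.
(* The powers of [x] stay in [O], whose elements have uniformly bounded denominators. *)
move=> Ox; have [K hK] := O_qbnd.
apply: (@pbnd_powers (K + K)) => k.
have Oxk : O (iter k (qm x) (qscal 1)) by elim: k => [|k IHk] /=; [apply: O1 | apply: O_mul].
have -> : N x ^+ k = N (iter k (qm x) (qscal 1)).
  by elim: k {Oxk} => [|k IHk]; rewrite ?qnorm_scal ?expr1n // exprS /= qnormM IHk.
by case: (qbndM (hK _ Oxk) (qbnd_conj (hK _ Oxk))).
Qed.

(* The localisation O_(p) = O (x) Z_(p). *)
Definition Op x := exists2 d : nat, ~~ (p %| d)%N & O (qscale d%:R x).

Lemma O_Op x : O x -> Op x.
Proof. by move=> Ox; exists 1%N; [exact: prime_ndvd1 | rewrite (_ : qscale _ x = x) //; qring]. Qed.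

Lemma Op_sub x y : Op x -> Op y -> Op (qsub x y).
Proof.
move=> [d1 n1 O1x] [d2 n2 O2y]; exists (d1 * d2)%N; first by rewrite Euclid_dvdM // negb_or n1 n2.
rewrite (_ : qscale _ _ = qsub (qscale d2%:R (qscale d1%:R x)) (qscale d1%:R (qscale d2%:R y))).
  by apply: O_sub; apply: O_scale_nat.
by rewrite natrM; qring.
Qed.

Lemma Op_mul x y : Op x -> Op y -> Op (qm x y).
Proof.
move=> [d1 n1 O1x] [d2 n2 O2y]; exists (d1 * d2)%N; first by rewrite Euclid_dvdM // negb_or n1 n2.
rewrite (_ : qscale _ _ = qm (qscale d1%:R x) (qscale d2%:R y)); first exact: O_mul.
by rewrite natrM; qring.
Qed.

Lemma Op_scale c x : in_pZ p 0 c -> Op x -> Op (qscale c x).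
Proof.
move=> [m [d [nd e]]] [d' nd' Ox].
exists (d * d')%N; first by rewrite Euclid_dvdM // negb_or nd nd'.
rewrite (_ : qscale _ _ = qscale m%:~R (qscale d'%:R x)); first exact: O_scale_int.
by rewrite expn0 mul1r in e; apply: quat_ext; rewrite /qscale /= natrM -e; ring.
Qed.

Lemma Op0 : Op (qscal 0). Proof. exact: O_Op O0. Qed.

Lemma Op_add x y : Op x -> Op y -> Op (qadd x y).
Proof.
move=> Ox Oy; rewrite (_ : qadd x y = qsub x (qsub (qscal 0) y)); last by qring.
by apply: Op_sub => //; apply: Op_sub Op0 Oy.
Qed.

Lemma Op_scal c : in_pZ p 0 c -> Op (qscal c).
Proof.
move=> hc; rewrite (_ : qscal c = qscale c (qscal 1)); last by qring.
exact: Op_scale hc (O_Op O1).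
Qed.

Lemma Op_qbnd : exists K, forall x, Op x -> qbnd K x.
Proof.
have [K hK] := O_qbnd; exists K => x [d nd /hK [/= h0 h1 h2 h3]].
have d0 : (d%:R : rat) != 0 by rewrite pnatr_eq0; apply: contraNneq nd => ->.
have pbnd_div u : pbnd K (d%:R * u) -> pbnd K u.
  move=> hu; rewrite /pbnd (_ : _ * u = d%:R^-1 * ((p ^ K)%:R * (d%:R * u))); last by field.
  exact: in_pZMl (in_pZ_invn nd) hu.
by split; apply: pbnd_div.
Qed.

Lemma Op_norm x : Op x -> in_pZ p 0 (N x).
Proof.
move=> [d nd /O_norm hN]; have d0 : (d%:R : rat) != 0.
  by rewrite pnatr_eq0; apply: contraNneq nd => ->.
rewrite (_ : N x = d%:R^-1 * (d%:R^-1 * N (qscale d%:R x))).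
  by do 2!apply: in_pZMl (in_pZ_invn nd) _.
by rewrite /qnorm; qunfold; field.
Qed.

Lemma Op_trace x : Op x -> in_pZ p 0 (2 * q0 x).
Proof.
move=> Ox; rewrite (qtrace_norm a b); apply: in_pZB (in_pZ_nat 1).
by apply: in_pZB; apply: Op_norm => //; apply: Op_add Ox (O_Op O1).
Qed.

Lemma Op_conj x : Op x -> Op (qconj x).
Proof.
move=> Ox; rewrite (_ : qconj x = qsub (qscal (2 * q0 x)) x); last by qring.
exact: Op_sub (Op_scal (Op_trace Ox)) Ox.
Qed.

(* Membership in O_p and in O_p^2 h, up to precision [p ^ n]. *)
Definition near_Op n x := exists2 A, Op A & qcong n x A.

Definition near_Op2h n h (v : quat rat * quat rat) :=
  exists x y, [/\ near_Op n x, near_Op n y & vcong n v (Dvmul a b (x, y) h)].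

Section Bounded.
Variable K : nat.
Hypothesis Op_bnd : forall x, Op x -> qbnd K x.

Lemma near_Op_qbnd n x : near_Op n x -> qbnd K x.
Proof. by case=> A /Op_bnd hA hxA; apply: qcong_qbnd hxA hA. Qed.

(* On O_(p)^2 h the hermitian form is [h h^*]; if that is congruent to [s I], all
   values of the form are congruent to multiples of [s] by elements of O_(p). *)
Lemma hform_near_Op2h n m h s (v w : quat rat * quat rat) : (n + 3 * K <= m)%N ->
  in_pZ p 0 s -> qbnd K v.1 -> qbnd K v.2 -> qbnd K w.1 -> qbnd K w.2 ->
  mcong m (Dmmul a b h (mconjT h)) (mscal s) -> near_Op2h m h v -> near_Op2h m h w ->
  exists2 z, Op z & qcong n (hform a b v w) (qm (qscal s) z).
Proof.
move=> le s0 v1 v2 w1 w2 [H11 H12 H21 H22] [x1 [y1 [[A1 OA1 xA1] [B1 OB1 yB1] Tv]]].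
move=> [x2 [y2 [[A2 OA2 xA2] [B2 OB2 yB2] Tw]]].
have cong_m k x y : (k <= m)%N -> qcong m x y -> qcong k x y by move=> km; apply: qcong_le.
have vcong_m k (v' w' : quat rat * quat rat) : (k <= m)%N -> vcong m v' w' -> vcong k w' v'.
  by move=> km [e1 e2]; split; apply/qcong_sym/(cong_m k).
have [bx1 by1 bx2 by2] : [/\ qbnd K x1, qbnd K y1, qbnd K x2 & qbnd K y2].
  by split; apply: (@near_Op_qbnd m); [exists A1 | exists B1 | exists A2 | exists B2].
exists (hform a b (A1, B1) (A2, B2)); first by apply: Op_add; apply: Op_mul => //; apply: Op_conj.
apply: (@qcong_trans _ _ (hform a b (Dvmul a b (x1, y1) h) (Dvmul a b (x2, y2) h))).
  by apply/qcong_sym/(hform_cong v1 v2 w1 w2); apply: vcong_m; try eassumption; lia.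
rewrite hform_vmul.
apply: (@qcong_trans _ _ (qm (qscal s) (hform a b (x1, y1) (x2, y2)))).
  have -> : qm (qscal s) (hform a b (x1, y1) (x2, y2)) =
            qadd (qadd (qm x1 (qm (qscal s) (qconj x2))) (qm x1 (qm (qscal 0) (qconj y2))))
                 (qadd (qm y1 (qm (qscal 0) (qconj x2))) (qm y1 (qm (qscal s) (qconj y2)))).
    by rewrite !qmul_scal_mid !qmul0l qadd0r qadd0l -qmulDr.
  by do 2!apply: qcongD; apply: (qcong_sandwich (K := K)) => //;
    first [exact: in_pZ0 | by apply: qbnd_conj | apply: cong_m => //; lia].
have bs : qbnd (K + K) (qscal s) := qbnd_scal (pbnd_in_pZ (K + K) s0).
apply: qcongM bs _ (qcong_refl _ _) _.
  by apply: qbndD; apply: qbndM;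
    [apply: Op_bnd | apply/qbnd_conj/Op_bnd | apply: Op_bnd | apply/qbnd_conj/Op_bnd].
apply: hform_cong; first [by apply: Op_bnd | by apply/qbnd_conj/Op_bnd | idtac].
all: by split; apply: cong_m => //; lia.
Qed.

End Bounded.

Lemma Op_qsumk k (c : nat -> rat) (w : nat -> quat rat) :
  (forall i, (i < k)%N -> in_pZ p 0 (c i) /\ O (w i)) -> Op (qsumk k (fun i => qscale (c i) (w i))).
Proof.
move=> hcw; apply: qsumk_closed; [exact: Op0 | exact: Op_add | move=> i /hcw [ci wi]].
exact: Op_scale ci (O_Op wi).
Qed.

Lemma in_Ol_const x : O x -> in_Ol p O (fun _ => x).
Proof.
move=> Ox; exists 1%N, (fun _ _ => 1), (fun _ => x).
split=> [i _|]; first by split=> //; apply: isZl1.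
by apply: qequiv_eq => n; rewrite /qsumk /=; qring.
Qed.

Lemma in_Ol_near_Op X : in_Ol p O X -> forall n, eventually (fun m => near_Op n (X m)).
Proof.
case=> k [c [w [hcw hX]]] n; have [M hM] := qequiv_cong hX n.
exists M => m /hM hm; eexists; last exact: hm.
by apply: Op_qsumk => i /hcw [[_ ci] wi].
Qed.

Lemma in_Ol2h_near h V :
  in_Ol2h a b p O h V -> forall n, eventually (fun m => near_Op2h n (h m) (V m)).
Proof.
case=> X [Y [hX [hY hV]]] n.
have [M hM] := eventually_and (in_Ol_near_Op hX n)
  (eventually_and (in_Ol_near_Op hY n) (vequiv_cong hV n)).
by exists M => m /hM [? [? ?]]; exists (X m), (Y m).
Qed.

(** * The lattice O^2 g *)

Section Lattice.
Variables lam mu : quat rat.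
Hypotheses (O_lam : O lam) (O_mu : O mu).
Hypothesis lam_norm : qm lam (qconj lam) = qscal (p%:R - 1).
Hypothesis mu_norm : qm mu (qconj mu) = qscal p%:R.
Hypothesis ram : ramified_at a b p.

Local Notation g := (M2 (qscal 1) lam (qscal 0) mu).

Lemma qnorm_lam : N lam = p%:R - 1. Proof. by rewrite /qnorm lam_norm. Qed.
Lemma qnorm_mu : N mu = p%:R. Proof. by rewrite /qnorm mu_norm. Qed.

(* The localisation L_(p) = O_(p)^2 g of the lattice L = O^2 g. *)
Definition Lp (v : quat rat * quat rat) :=
  exists x y, [/\ Op x, Op y & v = (x, qadd (qm x lam) (qm y mu))].

Lemma Lp_qnorm (v : quat rat * quat rat) : Lp v -> in_pZ p 1 (N v.1 + N v.2).
Proof.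
case=> x [y [Ox Oy ->]] /=.
have [Olx Omy] : Op (qm x lam) /\ Op (qm y mu) by split; apply: Op_mul => //; apply: O_Op.
rewrite qnormD !qnormM qnorm_lam qnorm_mu.
rewrite (_ : _ + _ = p%:R * (N x + N y) + 2 * q0 (qm (qm x lam) (qconj (qm y mu)))); last by ring.
apply: in_pZD; first exact: in_pZMr in_pZ_p (in_pZD (Op_norm Ox) (Op_norm Oy)).
apply: ramified_trace_in_pZ1 => //; first by apply/Op_trace/Op_mul/Op_conj.
rewrite qnormM qnorm_conj [N (qm y mu)]qnormM qnorm_mu.
exact: in_pZMl (Op_norm Olx) (in_pZMl (Op_norm Oy) in_pZ_p).
Qed.

Lemma Lp0 : Lp (qscal 0, qscal 0).
Proof. by exists (qscal 0), (qscal 0); split; try exact: Op0; congr pair; qring. Qed.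

Lemma Lp_add x1 x2 y1 y2 : Lp (x1, y1) -> Lp (x2, y2) -> Lp (qadd x1 x2, qadd y1 y2).
Proof.
case=> u1 [v1 [Ou1 Ov1 [-> ->]]] [u2 [v2 [Ou2 Ov2 [-> ->]]]].
by exists (qadd u1 u2), (qadd v1 v2); split; try exact: Op_add; congr pair; qring.
Qed.

Lemma O2g_Lp_scale c v : in_pZ p 0 c -> O2g a b O g v -> Lp (qscale c v.1, qscale c v.2).
Proof.
move=> hc [x [y [Ox [Oy ->]]]]; exists (qscale c x), (qscale c y).
by split; try exact: Op_scale hc (O_Op _); congr pair; qring.
Qed.

Lemma O2g_rows : O2g a b O g (qscal 1, lam) /\ O2g a b O g (qscal 0, mu).
Proof.
by split; [exists (qscal 1), (qscal 0) | exists (qscal 0), (qscal 1)];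
  (split; [exact: O1 | split; [exact: O0 | congr pair; qring]]) ||
  (split; [exact: O0 | split; [exact: O1 | congr pair; qring]]).
Qed.

Definition near_Lp n (v : quat rat * quat rat) := exists2 S, Lp S & vcong n v S.

Lemma near_Lp_scale_in_pZ1 K m h s : (forall x, Op x -> qbnd K x) -> (1 + K <= m)%N ->
  qcong m (e11 (Dmmul a b h (mconjT h))) (qscal s) -> near_Lp m (e11 h, e12 h) -> in_pZ p 1 s.
Proof.
move=> Op_bnd le H11 [S LS [h1 h2]].
have [OS1 OS2] : Op S.1 /\ Op S.2.
  by case: LS => x [y [Ox Oy ->]]; split => //; apply: Op_add; apply: Op_mul => //; apply: O_Op.
have d1 := qcong_norm (Op_bnd _ OS1) (qcong_le le h1).
have d2 := qcong_norm (Op_bnd _ OS2) (qcong_le le h2).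
have d3 : in_pZ p 1 (N (e11 h) + N (e12 h) - s).
  by case: (qcong_le (_ : 1 <= m)%N H11) => //; lia.
rewrite (_ : s = (N S.1 + N S.2) + (N (e11 h) - N S.1) + (N (e12 h) - N S.2)
                 - (N (e11 h) + N (e12 h) - s)); last by ring.
by apply: in_pZB d3; do 2!apply: in_pZD => //; apply: Lp_qnorm.
Qed.

(* [N(lam conj(mu)) = (p - 1) p] is divisible by [p] exactly once. *)
Lemma qmul_lam_mu_not_cong K s z : (forall x, Op x -> qbnd K x) -> in_pZ p 1 s -> Op z ->
  ~ qcong (2 + K) (qm lam (qconj mu)) (qm (qscal s) z).
Proof.
move=> Op_bnd s1 Oz hr; apply: pred_p_notin_pZ1; apply: (@in_pZ_divX 1 1).
have bsz : qbnd K (qm (qscal s) z).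
  by rewrite -[K]add0n; apply: qbndM (qbnd_scal (pbnd_in_pZ 0 s1)) (Op_bnd _ Oz).
have := qcong_norm bsz hr; rewrite !qnormM qnorm_conj qnorm_lam qnorm_mu qnorm_scal => hN.
rewrite expn1 (_ : _ * _ = ((p%:R - 1) * p%:R - s ^+ 2 * N z) + s * s * N z); last by ring.
exact: in_pZD hN (in_pZMr (in_pZM s1 s1) (Op_norm Oz)).
Qed.

Lemma in_Ll_near_Lp V : in_Ll p (O2g a b O g) V -> forall n, eventually (fun m => near_Lp n (V m)).
Proof.
case=> k [c [w [hcw hV]]] n; have [M hM] := vequiv_cong hV n.
exists M => m /hM hm; eexists; last exact: hm.
apply: qsumk2_closed; [exact: Lp0 | exact: Lp_add | move=> i /hcw [[_ ci] wi]].
exact: O2g_Lp_scale.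
Qed.

Lemma GU2_local_witness_absurd K m h s : (forall x, Op x -> qbnd K x) -> (2 + 4 * K <= m)%N ->
  mcong m (Dmmul a b h (mconjT h)) (mscal s) -> near_Lp m (e11 h, e12 h) ->
  near_Op2h m h (qscal 1, lam) -> near_Op2h m h (qscal 0, mu) -> False.
Proof.
move=> Op_bnd le Hs row W1 W2.
have s1 : in_pZ p 1 s by apply: near_Lp_scale_in_pZ1 Op_bnd _ _ row; [lia | case: Hs].
have bO x : O x -> qbnd K x by move=> Ox; apply/Op_bnd/O_Op.
have [|z Oz rz] := hform_near_Op2h Op_bnd (n := 2 + K) (v := (qscal 1, lam)) (w := (qscal 0, mu))
  _ (in_pZ_le (leq0n 1) s1)
  (bO _ O1) (bO _ O_lam) (bO _ O0) (bO _ O_mu) Hs W1 W2; first lia.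
apply: qmul_lam_mu_not_cong Op_bnd s1 Oz _.
by rewrite (_ : qm lam (qconj mu) = hform a b (qscal 1, lam) (qscal 0, mu)) //; qring.
Qed.

Lemma O2g_nonprincipal : nonprincipal_genus a b p O (O2g a b O g).
Proof.
move=> [h [[hc [s [_ hs]]] hL]]; have [K Op_bnd] := Op_qbnd.
(* The row (e11 h, e12 h) = (1, 0) h lies in L_p, and the rows of g lie in O_p^2 h. *)
pose V n := (e11 (h n), e12 (h n)).
have near_row : eventually (fun n => near_Lp (2 + 4 * K) (V n)).
  apply: in_Ll_near_Lp; apply/(hL V _).2; first by case: hc.
  exists (fun _ => qscal 1), (fun _ => qscal 0).
  split; first by apply: in_Ol_const; apply: O1.
  split; first by apply: in_Ol_const; apply: O0.
  by split; apply: qequiv_eq => n; rewrite /V /Dvmul /vmul /= -/(Dmul a b) qmul1l qmul0l qadd0r.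
have near_rows_g v : O2g a b O g v -> eventually (fun n => near_Op2h (2 + 4 * K) (h n) v).
  by move=> Lv; apply: in_Ol2h_near; apply/(hL _ (vcauchy_const v)).1; apply: in_Ll_const.
have [row1 row2] := O2g_rows.
have [M hM] := eventually_and (mequiv_cong hs (2 + 4 * K)) (eventually_and near_row
  (eventually_and (near_rows_g _ row1) (near_rows_g _ row2))).
have [HM [rowM [W1 W2]]] := hM M (leqnn M).
exact: GU2_local_witness_absurd Op_bnd (leqnn _) HM rowM W1 W2.
Qed.

End Lattice.

End Order.

End QuatCongruence.

End PadicIntegrality.

(** * The matrix P *)

Section Diagonalisation.
Variables a b : int.
Local Notation qm := (Dmul a b).

Lemma qtrace0_mul_scal x (c : rat) : qadd x (qconj x) = qscal 0 ->
  qadd (qm x (qscal c)) (qconj (qm x (qscal c))) = qscal 0.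
Proof.
move=> /(congr1 (@q0 rat)) /= x0; apply: quat_ext; qunfold; try ring.
by rewrite (_ : _ + _ = c * (q0 x + q0 x)); [rewrite x0 mulr0 | ring].
Qed.

Lemma unipotent_mconj_inv x : qadd x (qconj x) = qscal 0 ->
  let P := M2 (qscal 1) x (qscal 0) (qscal 1) in
  Dmmul a b P (mconj P) = mscal 1 /\ Dmmul a b (mconj P) P = mscal 1.
Proof.
move=> x0 P; rewrite /P /Dmmul /mmul /mconj /mscal /= -/(Dmul a b) !qconj_scal.
rewrite !qmul1l !qmul1r !qmul0l !qmul0r !qadd0l !qadd0r.
by split; congr M2; rewrite // qaddC.
Qed.

Lemma unipotent_diagonalises (p : nat) lam mu : (p%:R : rat) != 0 ->
  qm mu (qconj mu) = qscal p%:R ->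
  let r := qm lam (qconj mu) in qadd r (qconj r) = qscal 0 ->
  let g := M2 (qscal 1) lam (qscal 0) mu in
  let P := M2 (qscal 1) (qm (qconj r) (qscal p%:R^-1)) (qscal 0) (qscal 1) in
  is_diag (Dmmul a b (Dmmul a b P (Dmmul a b g (mconjT g))) (mconjT P)).
Proof.
move=> p0 mu_norm r r0 g P.
rewrite /P /g /Dmmul /mmul /mconjT /mtr /mconj /is_diag /= -/(Dmul a b).
rewrite !qconj_scal !qmul1l !qmul1r !qmul0l !qmul0r !qadd0l ?qadd0r mu_norm.
have r_conj : qconj r = qm mu (qconj lam) by rewrite /r qconjM qconjK.
split.
- by rewrite -qmulA qmul_scal mulVf // qmul1r -/r.
- by rewrite qconjM qconj_scal qconjK qmulA qmul_scal mulfV // qmul1l -r_conj qaddC.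
Qed.

End Diagonalisation.

Theorem lemma5p5 (p : nat) (a b : int) (O : quat rat -> Prop)
    (lam mu : quat rat) :
  prime p ->
  ramified_exactly_at_p_infty a b p ->
  is_maximal_order a b O ->
  O lam -> O mu ->
  Dmul a b lam (qconj lam) = qscal (p%:R - 1) ->
  Dmul a b mu (qconj mu) = qscal p%:R ->
  let r := Dmul a b lam (qconj mu) in
  qadd r (qconj r) = qscal 0 ->
  let g := M2 (qscal 1) lam (qscal 0) mu in
  let P := M2 (qscal 1) (Dmul a b (qconj r) (qscal (p%:R)^-1)) (qscal 0) (qscal 1) in
  let A := Dmmul a b g (mconjT g) in
  [/\ nonprincipal_genus a b p O (O2g a b O g),
      is_diag (Dmmul a b (Dmmul a b P A) (mconjT P))
    & Dmmul a b P (mconj P) = mscal 1 /\ Dmmul a b (mconj P) P = mscal 1].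
Proof.
move=> p_pr [_ ram] [O_order _] O_lam O_mu lam_norm mu_norm r r0 g P A.
have p0 : (p%:R : rat) != 0 by rewrite pnatr_eq0 -lt0n prime_gt0.
split.
- by apply: O2g_nonprincipal => //; apply/(ram p p_pr).
- exact: (unipotent_diagonalises (lam := lam) p0 mu_norm r0).
- apply: unipotent_mconj_inv; apply: qtrace0_mul_scal.
  by rewrite qconjK qaddC.
Qed.
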